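(* Let $L\subseteq\{a,b\}^*$ be the set of words whose last maximal block of the form $a^+b^*$ contains at least as many $a$'s as $b$'s; precisely, $L$ consists of the empty word together with all words $u\,a^nb^m$ where $u\in\{\varepsilon\}\cup\{a,b\}^*b$, $n\ge 1$ and $0\le m\le n$. Then $L\in\mathrm{CN}_1$ and $L\notin\mathrm{CH}$, i.e. $L$ is recognised by some (nondeterministic) $1$-VASS under coverability acceptance but by no history-deterministic $k$-VASS (for any $k$) under coverability acceptance.
   Context: Fix a finite alphabet $\Sigma$. A $k$-dimensional vector addition system with states ($k$-VASS) is a tuple $(Q,q_0,F,\delta)$ where $Q$ is a finite set of states, $q_0\in Q$ is initial, $F\subseteq Q$ is the set of accepting states, and $\delta\subseteq Q\times\Sigma\times\mathbb{Z}^k\times Q$ is a finite set of transitions (no $\varepsilon$-transitions). A run on a word $w=a_1\cdots a_n$ is a sequence of transitions $(p_{i-1},a_i,d_i,p_i)$ with $p_0=q_0$ such that the counter vectors $v_0=\vec 0$, $v_i=v_{i-1}+d_i$ all lie in $\mathbb{N}^k$. Under coverability acceptance the run is accepting if $p_n\in F$. The language is the set of words having an accepting run. A VASS is history-deterministic if there is a resolver, i.e. a function $r$ mapping each finite sequence of transitions and each letter $a$ to a transition labelled $a$, such that for every word $w$ in the language, the sequence of transitions obtained by successively applying $r$ to the letters of $w$ is a run on $w$ (counters stay nonnegative) and is accepting. $\mathrm{CN}_k$ (resp. $\mathrm{CH}_k$) is the class of languages recognised by arbitrary (resp. history-deterministic) $k$-VASS under coverability acceptance, and $\mathrm{CH}=\bigcup_{k\ge1}\mathrm{CH}_k$.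 *)

From mathcomp Require Import all_boot all_order all_algebra.
Set Implicit Arguments. Unset Strict Implicit. Unset Printing Implicit Defensive.
Import Order.TTheory GRing.Theory Num.Theory.
Local Open Scope ring_scope.

Record VASS (Sigma : finType) (k : nat) := MkVASS {
  state : finType;
  init : state;
  final : pred state;
  trans : seq (state * Sigma * {ffun 'I_k -> int} * state)
}.
Arguments state {Sigma k} v.
Arguments init {Sigma k} v.
Arguments final {Sigma k} v.
Arguments trans {Sigma k} v.

Section Runs.
Variables (Sigma : finType) (k : nat) (V : VASS Sigma k).

Definition transition := (state V * Sigma * {ffun 'I_k -> int} * state V)%type.

Definition tsrc (t : transition) : state V := t.1.1.1.
Definition tlab (t : transition) : Sigma := t.1.1.2.
Definition tvec (t : transition) : {ffun 'I_k -> int} := t.1.2.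
Definition tdst (t : transition) : state V := t.2.

Fixpoint is_run_from (p : state V) (v : 'I_k -> int) (w : seq Sigma)
    (ts : seq transition) : Prop :=
  match w, ts with
  | [::], [::] => True
  | a :: w', t :: ts' =>
      [/\ t \in trans V, tsrc t = p, tlab t = a,
          (forall i, 0 <= v i + tvec t i) &
          is_run_from (tdst t) (fun i => v i + tvec t i) w' ts']
  | _, _ => False
  end.

Definition is_run (w : seq Sigma) (ts : seq transition) : Prop :=
  is_run_from (init V) (fun _ => 0) w ts.

(* Coverability acceptance: the last state is accepting. *)
Definition accepting_run (w : seq Sigma) (ts : seq transition) : Prop :=
  is_run w ts /\ final V (last (init V) (map tdst ts)).

Definition accepts (w : seq Sigma) : Prop :=
  exists ts, accepting_run w ts.

Fixpoint resolve (r : seq transition -> Sigma -> transition)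
    (ts : seq transition) (w : seq Sigma) : seq transition :=
  match w with
  | [::] => ts
  | a :: w' => resolve r (rcons ts (r ts a)) w'
  end.

Definition is_resolver (r : seq transition -> Sigma -> transition) : Prop :=
  (forall ts a, r ts a \in trans V /\ tlab (r ts a) = a) /\
  (forall w, accepts w -> accepting_run w (resolve r [::] w)).

Definition history_deterministic : Prop := exists r, is_resolver r.

End Runs.

Definition CN (Sigma : finType) (k : nat) (L : seq Sigma -> Prop) : Prop :=
  exists V : VASS Sigma k, forall w, accepts V w <-> L w.

Definition CHk (Sigma : finType) (k : nat) (L : seq Sigma -> Prop) : Prop :=
  exists V : VASS Sigma k, history_deterministic V /\
    forall w, accepts V w <-> L w.

Definition CH (Sigma : finType) (L : seq Sigma -> Prop) : Prop :=
  exists k, (1 <= k)%N /\ CHk k L.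

Definition la : bool := true.
Definition lb : bool := false.

Definition Lab (w : seq bool) : Prop :=
  w = [::] \/
  exists (u : seq bool) (n m : nat),
    (u = [::] \/ exists u', u = rcons u' lb) /\
    (1 <= n)%N /\ (m <= n)%N /\
    w = u ++ nseq n la ++ nseq m lb.

From HB Require Import structures.
From mathcomp Require Import all_boot all_order all_algebra zify.
From Stdlib Require Import Classical IndefiniteDescription.
Set Implicit Arguments. Unset Strict Implicit. Unset Printing Implicit Defensive.
Import Order.TTheory GRing.Theory Num.Theory.

(* A 1-VASS accepts Lab by guessing where the last block of a's starts and
   counting its a's up and its b's down; a guess made too late only shortens
   the block, so nothing outside Lab is accepted.

   Against a resolver r of a k-VASS recognising Lab: every word extends to a
   word of Lab, so the run r builds on any word is a genuine run.  Dickson's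
   lemma gives, after any word u, a pumpable block: s < t such that after u a^s
   and u a^t r is in the same state, with pointwise larger counters after u a^t,
   and every counter that grows is already huge after u a^s.  Iterating
   u |-> u a^s b and applying Dickson's lemma once more yields words G and
   G y = u a^s b with the same state and larger counters, and the huge counters
   strictly increase along y.  Pumping y before u a^s therefore lends enough to
   these counters to replay r's run on the b^t after u a^t from u a^s: the word
   G y^m z a^s b^t (where u = G z) is accepted although s < t. *)

Definition ends_b (u : seq bool) : bool := last lb u == lb.

Lemma ends_b_cat u v : ends_b u -> ends_b v -> ends_b (u ++ v).
Proof. by rewrite /ends_b last_cat => /eqP ->. Qed.

Lemma ends_b_rcons u : ends_b (rcons u lb).
Proof. by rewrite /ends_b last_rcons. Qed.

Lemma ends_b_flatten (us : seq (seq bool)) : all ends_b us -> ends_b (flatten us).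
Proof. by elim: us => //= u us IH /andP[hu /IH]; apply: ends_b_cat. Qed.

Lemma rcons_nseq (x : bool) n : rcons (nseq n x) x = nseq n.+1 x.
Proof. by elim: n => //= n ->. Qed.

Lemma split_trailing_a w : exists2 u, ends_b u & exists n, w = u ++ nseq n la.
Proof.
elim/last_ind: w => [|w [] [u hu [n ->]]]; first by exists [::]; last exists 0.
- by exists u => //; exists n.+1; rewrite rcons_cat rcons_nseq.
- by exists (rcons (u ++ nseq n la) lb); [exact: ends_b_rcons | exists 0; rewrite cats0].
Qed.

Definition last_block (w : seq bool) : nat * nat :=
  let t := find (predC1 lb) (rev w) in (find (predC1 la) (drop t (rev w)), t).

Lemma find_nseq_cat (x : bool) n s :
  find (predC1 x) (nseq n x ++ s) = (n + find (predC1 x) s).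
Proof. by rewrite find_cat has_nseq /= eqxx andbF size_nseq. Qed.

Lemma last_blockE u s t : ends_b u -> 0 < s ->
  last_block (u ++ nseq s la ++ nseq t lb) = (s, t).
Proof.
move=> hu s_gt0; rewrite /last_block !rev_cat !rev_nseq -catA find_nseq_cat.
have -> : find (predC1 lb) (nseq s la ++ rev u) = 0 by case: s s_gt0.
rewrite addn0 drop_size_cat ?size_nseq // find_nseq_cat.
case/lastP: u hu => [|u x]; first by rewrite addn0.
by rewrite /ends_b last_rcons rev_rcons => /eqP ->; rewrite addn0.
Qed.

Lemma LabE u s t : ends_b u -> 0 < s ->
  Lab (u ++ nseq s la ++ nseq t lb) <-> t <= s.
Proof.
move=> hu s_gt0; split.
- case=> [|[u' [n [m [hu' [n_gt0 [le_mn E]]]]]]]; first by case: u hu => //; case: s s_gt0.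
  have hu'b : ends_b u' by case: hu' => [->|[v ->]]; [|apply: ends_b_rcons].
  have := last_blockE t hu s_gt0; rewrite E last_blockE //.
  by case=> <- <-.
- move=> le_ts; right; exists u, s, t; split => //.
  case/lastP: u hu => [|v x]; first by left.
  by rewrite /ends_b last_rcons => /eqP ->; right; exists v.
Qed.

Lemma Lab_nseq w n m : 0 < n -> m <= n -> Lab (w ++ nseq n la ++ nseq m lb).
Proof.
move=> n_gt0 le_mn; have [u hu [j ->]] := split_trailing_a w.
rewrite -catA [nseq j la ++ _]catA -nseqD.
by apply/LabE => //; [exact: ltn_addl | exact: leq_trans (leq_addl _ _)].
Qed.

Lemma Lab_rcons_a w : Lab (rcons w la).
Proof. by rewrite -cats1; apply: (@Lab_nseq w 1 0). Qed.

Definition a_chain (len : seq bool -> nat) (n : nat) : seq bool :=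
  iter n (fun w => w ++ nseq (len w) la ++ [:: lb]) [::].

Lemma a_chain_prefix len i j : i <= j ->
  exists2 y, a_chain len j = a_chain len i ++ y & ends_b y.
Proof.
elim: j => [|j IH]; first by rewrite leqn0 => /eqP ->; exists [::].
rewrite leq_eqVlt => /predU1P[-> | /IH [y E hy]]; first by exists [::]; rewrite ?cats0.
exists (y ++ nseq (len (a_chain len j)) la ++ [:: lb]); first by rewrite /= E -catA.
by apply: ends_b_cat hy _; rewrite cats1 ends_b_rcons.
Qed.

Lemma ends_b_a_chain len n : ends_b (a_chain len n).
Proof. by have [y -> hy] := a_chain_prefix len (leq0n n). Qed.

Definition infinitely (P : nat -> Prop) : Prop := forall n, exists2 i, n <= i & P i.

Lemma infinitely_pigeonhole (T : finType) (lab : nat -> T) :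
  exists l, infinitely (fun i => lab i = l).
Proof.
apply: NNPP => no_l.
have /fin_all_exists [bnd bndP] : forall l, exists n, forall i, n <= i -> lab i <> l.
  move=> l; apply: NNPP => H; apply: no_l; exists l => n.
  apply: NNPP => H'; apply: H; exists n => i le_ni E; by apply: H'; exists i.
pose N := \max_(l : T) bnd l.
exact: (bndP (lab N) N (leq_bigmax _)).
Qed.

Lemma infinitely_minimal (g : nat -> nat) P : infinitely P ->
  infinitely (fun i => P i /\ forall j, i <= j -> P j -> g i <= g j).
Proof.
move=> infP n; have [i le_ni Pi] := infP n.
have [x gi] : exists x, g i = x by exists (g i).
elim/ltn_ind: x i gi le_ni Pi => x IH i gi le_ni Pi.
have [[j [le_ij Pj lt_gj]] | no_smaller] := classic (exists j, [/\ i <= j, P j & g j < g i]).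
  by apply: (IH (g j) _ j erefl (leq_trans le_ni le_ij) Pj); rewrite -gi.
exists i => //; split=> // j le_ij Pj; rewrite leqNgt; apply/negP => lt_gj.
by apply: no_smaller; exists j.
Qed.

Lemma infinitely_monotone k (f : nat -> 'I_k -> nat) P (cs : seq 'I_k) : infinitely P ->
  exists Q, [/\ infinitely Q, forall i, Q i -> P i &
    forall i j, Q i -> Q j -> i <= j -> forall c, c \in cs -> f i c <= f j c].
Proof.
elim: cs => [|c cs IH] infP; first by exists P.
have [Q [infQ QP Qmono]] := IH infP.
exists (fun i => Q i /\ forall j, i <= j -> Q j -> f i c <= f j c); split.
- exact: infinitely_minimal.
- by move=> i [/QP].
- move=> i j [Qi min_i] [Qj _] le_ij c'; rewrite inE => /predU1P[-> | c'cs].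
  + exact: min_i.
  + exact: Qmono.
Qed.

Lemma dickson (T : finType) k (f : nat -> 'I_k -> nat) (lab : nat -> T) :
  exists i j, [/\ i < j, lab i = lab j & forall c, f i c <= f j c].
Proof.
have [l infl] := infinitely_pigeonhole lab.
have [Q [infQ Ql Qmono]] := infinitely_monotone f (enum 'I_k) infl.
have [i _ Qi] := infQ 0; have [j lt_ij Qj] := infQ i.+1.
exists i, j; split=> //; first by rewrite (Ql _ Qi) (Ql _ Qj).
by move=> c; apply: Qmono (ltnW lt_ij) _ _; rewrite ?mem_enum.
Qed.

Local Open Scope ring_scope.

Section Runs.
Variables (Sigma : finType) (k : nat) (V : VASS Sigma k).
Implicit Types (p q : state V) (v : 'I_k -> int) (w : seq Sigma) (ts : seq (transition V)).

Definition effect ts (i : 'I_k) : int := \sum_(t <- ts) tvec t i.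

Definition target p ts : state V := last p (map (@tdst _ _ V) ts).

Lemma effect_nil i : effect [::] i = 0.
Proof. exact: big_nil. Qed.

Lemma effect_cons t ts i : effect (t :: ts) i = tvec t i + effect ts i.
Proof. by rewrite /effect big_cons. Qed.

Lemma effect_cat ts1 ts2 i : effect (ts1 ++ ts2) i = effect ts1 i + effect ts2 i.
Proof. by rewrite /effect big_cat. Qed.

Lemma run_from_mono p v v' w ts : (forall i, v i <= v' i) ->
  is_run_from p v w ts -> is_run_from p v' w ts.
Proof.
elim: w p v v' ts => [|a w IH] p v v' [|t ts] //= le_vv' [t_in src lab ge0 run].
split=> // [i | ]; first by apply: le_trans (ge0 i) _; rewrite lerD2r.
by apply: IH run => i /=; rewrite lerD2r.
Qed.

Lemma size_run_from p v w ts : is_run_from p v w ts -> size ts = size w.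
Proof. by elim: w p v ts => [|a w IH] p v [|t ts] //= [_ _ _ _ /IH ->]. Qed.

Lemma run_from_cat p v w1 w2 ts1 ts2 : size ts1 = size w1 ->
  is_run_from p v (w1 ++ w2) (ts1 ++ ts2) <->
  is_run_from p v w1 ts1 /\
  is_run_from (target p ts1) (fun i => v i + effect ts1 i) w2 ts2.
Proof.
elim: w1 p v ts1 => [|a w1 IH] p v [|t ts1] //= size_ts1.
  split=> [run | [_ run]]; [split=> // | ]; apply: run_from_mono run => i;
  by rewrite effect_nil addr0.
case: size_ts1 => /IH IHt; rewrite /target /=.
have veq i : v i + tvec t i + effect ts1 i = v i + effect (t :: ts1) i.
  by rewrite effect_cons addrA.
split=> [[? ? ? ? /IHt[run1 run2]] | [[? ? ? ? run1] run2]].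
- by do ![split=> //]; apply: run_from_mono run2 => i; rewrite veq.
- by split=> //; apply/IHt; split=> //; apply: run_from_mono run2 => i; rewrite veq.
Qed.

Lemma run_from_ge0 p v w ts : is_run_from p v w ts -> (forall i, 0 <= v i) ->
  forall i, 0 <= v i + effect ts i.
Proof.
elim: w p v ts => [|a w IH] p v [|t ts] //=; [move=> _ ge0 i | case=> _ _ _ ge0 run _ i].
  by rewrite effect_nil addr0.
by rewrite effect_cons addrA; apply: IH run ge0 i.
Qed.

Definition max_step : nat := \max_(t <- trans V) \max_(i < k) `|tvec t i|%N.

Lemma run_from_effect_bound p v w ts i : is_run_from p v w ts ->
  (`|effect ts i| <= max_step * size w)%N.
Proof.
elim: w p v ts => [|a w IH] p v [|t ts] //=; [move=> _ | case=> t_in _ _ _ /IH bnd].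
  by rewrite effect_nil.
have step : (`|tvec t i| <= max_step)%N.
  by apply: bigmaxn_sup_seq t_in _ _; rewrite // (bigD1 i) ?leq_maxl.
rewrite effect_cons mulnS; lia.
Qed.

Definition reach p v w q (v' : 'I_k -> int) : Prop :=
  exists ts, [/\ is_run_from p v w ts, target p ts = q & forall i, v' i = v i + effect ts i].

Lemma eq_reach p v1 v2 w q v1' v2' : v1 =1 v2 -> v1' =1 v2' ->
  reach p v1 w q v1' -> reach p v2 w q v2'.
Proof.
move=> E E' [ts [run tgt eff]]; exists ts; split=> // [ | i]; last by rewrite -E' -E.
by apply: run_from_mono run => i; rewrite E.
Qed.

Lemma reach_nil p v : reach p v [::] p v.
Proof. by exists [::]; split=> // i; rewrite effect_nil addr0. Qed.

Lemma reach_step t v : t \in trans V -> (forall i, 0 <= v i + tvec t i) ->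
  reach (tsrc t) v [:: tlab t] (tdst t) (fun i => v i + tvec t i).
Proof.
move=> t_in ge0; exists [:: t]; split=> [ | // | i]; first by split.
by rewrite effect_cons effect_nil addr0.
Qed.

Lemma reach_cat p v w1 q v1 w2 q' v2 :
  reach p v w1 q v1 -> reach q v1 w2 q' v2 -> reach p v (w1 ++ w2) q' v2.
Proof.
move=> [ts1 [run1 <- eff1]] [ts2 [run2 <- eff2]]; exists (ts1 ++ ts2); split.
- apply/run_from_cat; first exact: size_run_from run1.
  by split=> //; apply: run_from_mono run2 => i; rewrite eff1.
- by rewrite /target map_cat last_cat.
- by move=> i; rewrite eff2 eff1 effect_cat addrA.
Qed.

Lemma reach_shift p v w q v' u : (forall i, v i <= u i) ->
  reach p v w q v' -> reach p u w q (fun i => u i + (v' i - v i)).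
Proof.
move=> le_vu [ts [run tgt eff]]; exists ts; split=> // [ | i].
  exact: run_from_mono run.
by rewrite eff [v i + _]addrC addrK.
Qed.

Lemma reach_iter p v y d n : (forall i, 0 <= d i) ->
  reach p v y p (fun i => v i + d i) ->
  reach p v (flatten (nseq n y)) p (fun i => v i + d i *+ n).
Proof.
move=> d_ge0 loop; elim: n => [|n IH] /=.
  by apply: eq_reach (reach_nil p v) => // i; rewrite addr0.
apply: reach_cat loop (eq_reach (frefl _) _ (reach_shift _ IH)) => i.
  by rewrite mulrSr [v i + _ *+ n]addrC addrK -addrA [d i + _]addrC.
by rewrite lerDl.
Qed.

Lemma reach_loop t v n : t \in trans V -> tdst t = tsrc t ->
  (forall i, 0 <= v i) -> (forall i, 0 <= v i + tvec t i *+ n) ->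
  reach (tsrc t) v (nseq n (tlab t)) (tsrc t) (fun i => v i + tvec t i *+ n).
Proof.
move=> t_in loop_t; elim: n v => [|n IH] v v_ge0 vn_ge0.
  by apply: eq_reach (reach_nil _ v) => // i; rewrite addr0.
have step_ge0 i : 0 <= v i + tvec t i. (* between [v i] and [v i + tvec t i *+ n.+1] *)
  by have := vn_ge0 i; have := v_ge0 i; rewrite -mulr_natr; nia.
rewrite -[nseq n.+1 _]/([:: tlab t] ++ nseq n (tlab t)).
apply: reach_cat (reach_step t_in step_ge0) _; rewrite loop_t.
apply: eq_reach (IH _ step_ge0 _) => // i; first by rewrite mulrS addrA.
by rewrite -addrA -mulrS.
Qed.

Lemma reach_ge0 p v w q v' : reach p v w q v' -> (forall i, 0 <= v i) -> forall i, 0 <= v' i.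
Proof. by move=> [ts [run _ eff]] ge0 i; rewrite eff; apply: run_from_ge0 run ge0 i. Qed.

Lemma reach_bound p v w q v' i : reach p v w q v' -> (`|v' i - v i| <= max_step * size w)%N.
Proof. by move=> [ts [run _ ->]]; rewrite addrC addKr; apply: run_from_effect_bound run. Qed.

Lemma accepts_reach w q v' : reach (init V) (fun _ => 0) w q v' -> final V q -> accepts V w.
Proof. by move=> [ts [run tgt _]] fin; exists ts; split; rewrite // -/(target _ _) tgt. Qed.

End Runs.

Section ResolverRuns.
Variables (Sigma : finType) (k : nat) (V : VASS Sigma k).
Variable r : seq (transition V) -> Sigma -> transition V.
Hypothesis r_resolver : is_resolver r.
Hypothesis V_extendable : forall w, exists x, accepts V (w ++ x).
Implicit Types (w x : seq Sigma) (ts : seq (transition V)).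

Lemma resolve_cat ts w x : resolve r ts (w ++ x) = resolve r (resolve r ts w) x.
Proof. by elim: w ts => //= a w IH ts. Qed.

Lemma resolve_prefix ts w : exists e, resolve r ts w = ts ++ e.
Proof.
elim: w ts => [|a w IH] ts /=; first by exists [::]; rewrite cats0.
by have [e ->] := IH (rcons ts (r ts a)); exists (r ts a :: e); rewrite cat_rcons.
Qed.

Lemma size_resolve ts w : size (resolve r ts w) = (size ts + size w)%N.
Proof. by elim: w ts => [|a w IH] ts /=; rewrite ?addn0 // IH size_rcons addSnnS. Qed.

Definition rrun w := resolve r [::] w.
Definition rstate w := target (init V) (rrun w).
Definition rcount w i := effect (rrun w) i.

Lemma size_rrun w : size (rrun w) = size w.
Proof. exact: size_resolve. Qed.

Lemma rrun_cat w x : exists e, rrun (w ++ x) = rrun w ++ e.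
Proof. by rewrite /rrun resolve_cat; apply: resolve_prefix. Qed.

Lemma rrun_is_run w : is_run w (rrun w).
Proof.
have [x /(proj2 r_resolver) [run _]] := V_extendable w.
have [e E] := rrun_cat w x.
by move: run; rewrite -/(rrun _) E => /run_from_cat-/(_ (size_rrun w)) [].
Qed.

Lemma reach_rstate w : reach (init V) (fun _ => 0) w (rstate w) (rcount w).
Proof. by exists (rrun w); split=> // [|i]; [exact: rrun_is_run | rewrite add0r]. Qed.

Lemma rcount_ge0 w i : 0 <= rcount w i.
Proof. exact: reach_ge0 (reach_rstate w) (fun _ => lexx 0) i. Qed.

Lemma final_rstate w : accepts V w -> final V (rstate w).
Proof. by move/(proj2 r_resolver) => []. Qed.

Lemma reach_rstate_cat w x (v : 'I_k -> int) : (forall i, rcount w i <= v i) ->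
  reach (rstate w) v x (rstate (w ++ x)) (fun i => v i + (rcount (w ++ x) i - rcount w i)).
Proof.
move=> le_v; have [e E] := rrun_cat w x.
have := rrun_is_run (w ++ x); rewrite /is_run E => /run_from_cat-/(_ (size_rrun w)) [_ run].
apply: reach_shift le_v _; exists e; split.
- by apply: run_from_mono run => i; rewrite add0r.
- by rewrite /rstate E /target map_cat last_cat.
- by move=> i; rewrite /rcount E effect_cat.
Qed.

Lemma rcount_le w i : rcount w i <= (max_step V * size w)%:R.
Proof.
have := reach_bound i (reach_rstate w); have := rcount_ge0 w i; rewrite subr0; lia.
Qed.

Lemma rcount_cat_ge w x i : rcount w i - (max_step V * size x)%:R <= rcount (w ++ x) i.
Proof.
by have := reach_bound i (reach_rstate_cat x (fun i => lexx (rcount w i))); lia.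
Qed.

End ResolverRuns.

Section NoResolverForLab.
Variables (k : nat) (V : VASS bool k) (r : seq (transition V) -> bool -> transition V).
Hypothesis r_resolver : is_resolver r.
Hypothesis V_Lab : forall w, accepts V w <-> Lab w.

Lemma V_extendable w : exists x, accepts V (w ++ x).
Proof. by exists [:: la]; apply/V_Lab; rewrite cats1; apply: Lab_rcons_a. Qed.

Let reach_init := reach_rstate r_resolver V_extendable.
Let reach_extend := reach_rstate_cat r_resolver V_extendable.
Let count_ge0 := rcount_ge0 r_resolver V_extendable.
Let count_le := rcount_le r_resolver V_extendable.
Let count_cat_ge := rcount_cat_ge r_resolver V_extendable.

Definition pumpable_block u (T s t : nat) : Prop :=
  [/\ (0 < s < t)%N, rstate r (u ++ nseq s la) = rstate r (u ++ nseq t la),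
      forall i, rcount r (u ++ nseq s la) i <= rcount r (u ++ nseq t la) i &
      forall i, rcount r (u ++ nseq s la) i < rcount r (u ++ nseq t la) i ->
                T%:R <= rcount r (u ++ nseq s la) i].

Lemma pumpable_block_exists u T : exists st : nat * nat, pumpable_block u T st.1 st.2.
Proof.
suff [s [t blk]] : exists s t, pumpable_block u T s t by exists (s, t).
pose f n i := `|rcount r (u ++ nseq n.+1 la) i|%N.
(* Labelling by counters capped at [T]: a counter that grows cannot have been below [T]. *)
pose lab n := (rstate r (u ++ nseq n.+1 la), [ffun i => inord (minn (f n i) T) : 'I_T.+1]).
have [n [n' [lt_nn' [st_eq /ffunP cap_eq]] le_f]] := dickson f lab.
exists n.+1, n'.+1; split=> // [i | i]; have := count_ge0 (u ++ nseq n.+1 la) i;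
  have := count_ge0 (u ++ nseq n'.+1 la) i; have := le_f i; rewrite /f.
  by lia.
have := cap_eq i; rewrite !ffunE => /(congr1 (@nat_of_ord _)).
by rewrite !inordK ?ltnS ?geq_minr // /f; lia.
Qed.

Lemma no_pumping_pattern G y z s t :
  ends_b G -> ends_b y -> ends_b z -> (0 < s < t)%N ->
  rstate r (G ++ y) = rstate r G -> (forall i, rcount r G i <= rcount r (G ++ y) i) ->
  rstate r (G ++ z ++ nseq s la) = rstate r (G ++ z ++ nseq t la) ->
  (forall i, rcount r (G ++ z ++ nseq s la) i < rcount r (G ++ z ++ nseq t la) i ->
             rcount r G i < rcount r (G ++ y) i) ->
  False.
Proof.
move=> hG hy hz /andP[s_gt0 lt_st] y_loop y_up st_eq grow.
set us := G ++ z ++ nseq s la; set ut := G ++ z ++ nseq t la.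
pose d i := rcount r (G ++ y) i - rcount r G i.
pose m := (max_step V * size ut)%N.
have d_ge0 i : 0 <= d i by rewrite subr_ge0.
have loop : reach (rstate r G) (rcount r G) y (rstate r G) (fun i => rcount r G i + d i).
  by rewrite -{2}y_loop; apply: reach_extend.
have to_us : reach (rstate r G) (fun i => rcount r G i + d i *+ m) (z ++ nseq s la)
                   (rstate r ut) (fun i => rcount r us i + d i *+ m).
  rewrite -st_eq; apply: eq_reach (reach_extend _ _) => // i.
    by rewrite -/us; lia.
  by rewrite /= lerDl mulrn_wge0.
(* A counter that grows from [us] to [ut] also grows along [y], and [m] bounds it at [ut]. *)
have cover i : rcount r ut i <= rcount r us i + d i *+ m.
  have := count_ge0 us i; have := count_le ut i.
  rewrite -/m -[d i *+ m]mulr_natr /d.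
  case: (ltrP (rcount r us i) (rcount r ut i)) => [/grow | le_ut _ _]; first by nia.
  by rewrite (le_trans le_ut) // lerDl mulr_ge0 ?subr_ge0.
have to_end := reach_extend (nseq t lb) cover.
have : accepts V (G ++ flatten (nseq m y) ++ (z ++ nseq s la) ++ nseq t lb).
  apply: accepts_reach (reach_cat (reach_init G) _) _.
    exact: reach_cat (reach_iter m d_ge0 loop) (reach_cat to_us to_end).
  apply: (final_rstate r_resolver); apply/V_Lab; rewrite /ut -!catA catA.
  by apply/LabE; rewrite ?ends_b_cat //; apply: ltn_trans lt_st.
have hX : ends_b ((G ++ flatten (nseq m y)) ++ z).
  by rewrite !ends_b_cat // ends_b_flatten // all_nseq hy orbT.
by move/V_Lab; rewrite -!catA catA (catA _ z) => /(LabE t hX s_gt0); rewrite leqNgt lt_st.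
Qed.

(* A counter that reaches [threshold u] after [u a^s] is, even after one more
   b, above its value after any prefix of [u]. *)
Definition threshold (u : seq bool) : nat := (max_step V * (size u).+1).+1.

Lemma no_resolver_for_Lab : False.
Proof.
have [blk blkP] := functional_choice _ (fun u => pumpable_block_exists u (threshold u)).
pose W := a_chain (fun u => (blk u).1).
have [l1 [l2 [lt_l12 st_eq le_cnt]]] :=
  dickson (fun l i => `|rcount r (W l) i|%N) (fun l => rstate r (W l)).
case: l2 lt_l12 st_eq le_cnt => // l lt_l1l st_eq le_cnt.
rewrite ltnS in lt_l1l; have [z Ez hz] := a_chain_prefix (fun u => (blk u).1) lt_l1l.
rewrite -/W in Ez.
have Wl : W l.+1 = W l1 ++ z ++ nseq (blk (W l)).1 la ++ [:: lb].
  by rewrite catA -Ez.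
have := blkP (W l); case: (blk (W l)) Wl => s t Wl /= [s_bounds st_st le_st grow].
apply: (@no_pumping_pattern (W l1) (z ++ nseq s la ++ [:: lb]) z s t) => //.
- exact: ends_b_a_chain.
- by rewrite ends_b_cat // cats1 ends_b_rcons.
- by rewrite -Wl.
- move=> i; have := le_cnt i; rewrite -Wl.
  by have := count_ge0 (W l1) i; have := count_ge0 (W l.+1) i; lia.
- by rewrite !catA -Ez.
- move=> i; rewrite !catA -Ez => /grow; rewrite /threshold.
  have := count_le (W l1) i.
  have := count_cat_ge (W l ++ nseq s la) [:: lb] i.
  have : (max_step V * size (W l1) <= max_step V * size (W l))%N.
    by rewrite leq_mul2l Ez size_cat leq_addr orbT.
  by rewrite /= muln1; lia.
Qed.

End NoResolverForLab.

Inductive lab_state := Init | Wait | ReadA | ReadB.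

Definition lab_state_code (q : lab_state) : bool * bool :=
  match q with Init => (false, false) | Wait => (false, true)
             | ReadA => (true, false) | ReadB => (true, true) end.

Definition lab_state_decode (c : bool * bool) : lab_state :=
  match c with (false, false) => Init | (false, true) => Wait
             | (true, false) => ReadA | (true, true) => ReadB end.

Lemma lab_state_codeK : cancel lab_state_code lab_state_decode.
Proof. by case. Qed.

HB.instance Definition _ := Finite.copy lab_state (can_type lab_state_codeK).

Definition vec1 (d : int) : {ffun 'I_1 -> int} := [ffun _ => d].

Definition lab_trans : seq (lab_state * bool * {ffun 'I_1 -> int} * lab_state) :=
  [:: (Init, la, vec1 0, Wait); (Init, lb, vec1 0, Wait);
      (Wait, la, vec1 0, Wait); (Wait, lb, vec1 0, Wait);
      (Init, la, vec1 1, ReadA); (Wait, la, vec1 1, ReadA); (ReadA, la, vec1 1, ReadA);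
      (ReadA, lb, vec1 (-1), ReadB); (ReadB, lb, vec1 (-1), ReadB)].

Definition Lab_VASS : VASS bool 1 := MkVASS Init (fun q => q != Wait) lab_trans.

Definition lab_inv (q : lab_state) (h : seq bool) (c : int) : Prop :=
  match q with
  | Init => h = [::] /\ c = 0
  | Wait => c = 0
  | ReadA => exists u n, [/\ (0 < n)%N, h = u ++ nseq n la & c = n%:Z]
  | ReadB => exists u n m, [/\ (0 < n)%N, h = u ++ nseq n la ++ nseq m lb & c = n%:Z - m%:Z]
  end.

Lemma lab_inv_step (t : transition Lab_VASS) h c : t \in trans Lab_VASS ->
  lab_inv (tsrc t) h c -> lab_inv (tdst t) (rcons h (tlab t)) (c + tvec t ord0).
Proof.
rewrite /= /lab_trans !inE.
do ![case/orP => [/eqP -> /=|]]; last move/eqP => ->.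
all: rewrite /tsrc /tdst /tlab /tvec /= ffunE ?addr0 //.
- by case=> _ ->.
- by case=> _ ->.
- by case=> -> ->; exists [::], 1%N.
- by move=> ->; exists h, 1%N; rewrite cats1.
- case=> u [n [n_gt0 -> ->]]; exists u, n.+1; split=> //.
    by rewrite rcons_cat rcons_nseq.
  by rewrite -addn1 PoszD.
- case=> u [n [n_gt0 -> ->]]; exists u, n, 1%N; split=> //.
  by rewrite -cats1 -catA.
- case=> u [n [m [n_gt0 -> ->]]]; exists u, n, m.+1; split=> //.
    by rewrite !rcons_cat rcons_nseq.
  by rewrite -addn1 PoszD opprD addrA.
Qed.

Lemma lab_inv_run (p : state Lab_VASS) (v : 'I_1 -> int) w (ts : seq (transition Lab_VASS)) h :
  is_run_from p v w ts -> lab_inv p h (v ord0) ->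
  lab_inv (target p ts) (h ++ w) (v ord0 + effect ts ord0).
Proof.
elim: w p v ts h => [|x w IH] p v [|t ts] h //=.
  by rewrite cats0 effect_nil addr0.
case=> t_in <- <- _ run /(lab_inv_step t_in) inv_t.
by rewrite -cat_rcons effect_cons addrA; apply: IH run inv_t.
Qed.

Lemma Lab_VASS_sound w : accepts Lab_VASS w -> Lab w.
Proof.
case=> ts [run fin]; have := lab_inv_run (h := [::]) run (conj erefl erefl).
have := run_from_ge0 run (fun _ => lexx 0) ord0.
rewrite -/(target _ _) in fin; move: fin; rewrite add0r /=.
case: (target (init Lab_VASS) ts) => //= _ c_ge0.
- by case=> -> _; left.
- by case=> u [n [n_gt0 -> _]]; rewrite -[_ ++ _]cats0 -catA; apply: (@Lab_nseq u n 0).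
- by case=> u [n [m [n_gt0 -> c_eq]]]; apply: Lab_nseq => //; lia.
Qed.

Lemma lab_step p x d q (c : int) : (p, x, vec1 d, q) \in lab_trans -> 0 <= c + d ->
  reach (V := Lab_VASS) p (fun _ => c) [:: x] q (fun _ => c + d).
Proof.
move=> t_in ge0.
have step := @reach_step _ _ Lab_VASS (p, x, vec1 d, q) (fun _ => c) t_in.
by apply: eq_reach (step _) => // i; rewrite /tvec /= ffunE.
Qed.

Lemma lab_loop p x d n (c : int) : (p, x, vec1 d, p) \in lab_trans ->
  0 <= c -> 0 <= c + d * n%:R ->
  reach (V := Lab_VASS) p (fun _ => c) (nseq n x) p (fun _ => c + d * n%:R).
Proof.
move=> t_in c_ge0 cn_ge0.
have loop := @reach_loop _ _ Lab_VASS (p, x, vec1 d, p) (fun _ => c) n t_in.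
rewrite mulr_natr in cn_ge0 *.
by apply: eq_reach (loop _ _ _) => // i; rewrite /tvec /= ffunE.
Qed.

Lemma lab_reach_prefix u : exists2 q, (q, la, vec1 1, ReadA) \in lab_trans &
  reach (V := Lab_VASS) Init (fun _ => 0) u q (fun _ => 0).
Proof.
case: u => [|x u].
  by exists Init; [rewrite !inE eqxx /= ?orbT | exact: reach_nil].
have step p y : (p, y, vec1 0, Wait) \in lab_trans ->
    reach (V := Lab_VASS) p (fun _ => 0) [:: y] Wait (fun _ => 0).
  by move=> t_in; apply: eq_reach (lab_step t_in _) => // i; rewrite addr0.
exists Wait; first by rewrite !inE eqxx /= ?orbT.
rewrite -cat1s; apply: reach_cat (step _ _ _) _; first by case: x; rewrite !inE eqxx /= ?orbT.
elim: u => [|y u IH]; first exact: reach_nil.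
by rewrite -cat1s; apply: reach_cat (step _ _ _) IH; case: y; rewrite !inE eqxx /= ?orbT.
Qed.

Lemma Lab_VASS_complete w : Lab w -> accepts Lab_VASS w.
Proof.
case=> [-> | [u [n [m [_ [n_gt0 [le_mn ->]]]]]]]; first by exists [::].
case: n n_gt0 le_mn => // n _ le_mn.
have [q q_a pre] := lab_reach_prefix u.
have a_loop : (ReadA, la, vec1 1, ReadA) \in lab_trans by rewrite !inE eqxx /= ?orbT.
have block_a : reach (V := Lab_VASS) Init (fun _ => 0) (u ++ nseq n.+1 la) ReadA
                     (fun _ => n.+1%:R).
  rewrite -[nseq n.+1 _]/([:: la] ++ nseq n la).
  by apply: eq_reach (reach_cat pre (reach_cat (lab_step q_a _) (lab_loop (n := n) a_loop _ _)));
    do ?move=> i /=; lia.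
case: m le_mn => [_ | m le_mn]; first by rewrite cats0; apply: accepts_reach block_a _.
have ab_step : (ReadA, lb, vec1 (-1), ReadB) \in lab_trans by rewrite !inE eqxx /= ?orbT.
have b_loop : (ReadB, lb, vec1 (-1), ReadB) \in lab_trans by rewrite !inE eqxx /= ?orbT.
have block_b : reach (V := Lab_VASS) ReadA (fun _ => n.+1%:R) (nseq m.+1 lb) ReadB
                     (fun _ => n.+1%:R - m.+1%:R).
  rewrite -[nseq m.+1 _]/([:: lb] ++ nseq m lb).
  have b_first := lab_step (c := n.+1%:R) ab_step.
  by apply: eq_reach (reach_cat (b_first _) (lab_loop (n := m) b_loop _ _)); do ?move=> i /=; lia.
rewrite catA; exact: accepts_reach (reach_cat block_a block_b) _.
Qed.

Lemma CN1_Lab : CN 1 Lab.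
Proof. by exists Lab_VASS => w; split; [apply: Lab_VASS_sound | apply: Lab_VASS_complete]. Qed.

Local Close Scope ring_scope.

Theorem mainTheorem4 : CN 1 Lab /\ ~ CH Lab.
Proof.
split; first exact: CN1_Lab.
by case=> k [_ [V [[r r_resolver] V_Lab]]]; apply: no_resolver_for_Lab r_resolver V_Lab.
Qed.
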